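(* Let $\eta_0,\eta_1,\eta_2,\dots$ be an effective enumeration of closed λ-terms with $\eta_i\twoheadrightarrow_{\beta\eta}\mathtt{I}$ for all $i$. Let $\mathbf{I}^\Omega$ and $\boldsymbol{\eta}^\Omega$ be closed λ-terms (defined via the fixed point combinator) such that $\mathbf{I}^\Omega yx=_\beta[y\Omega^{\sim n}x]_{n\in\mathbb{N}}=[yx,[y\Omega x,[y\Omega\Omega x,\dots]]]$ and $\boldsymbol{\eta}^\Omega yx=_\beta[y\Omega^{\sim n}(\eta_nx)]_{n\in\mathbb{N}}=[y(\eta_0x),[y\Omega(\eta_1x),[y\Omega\Omega(\eta_2x),\dots]]]$. Then $\mathcal{B}\omega\vdash\mathbf{I}^\Omega=\boldsymbol{\eta}^\Omega$.
   Context: $\mathtt{I}=\lambda x.x$, $\Omega=(\lambda x.xx)(\lambda x.xx)$, $M\Omega^{\sim n}$ denotes $M\Omega\cdots\Omega$ ($n$ copies). Pairs/tuples: $[M_1,\dots,M_n]=\lambda z.zM_1\cdots M_n$ with $z$ fresh. An enumeration $(M_n)_n$ of closed terms is effective if there is a closed $F$ with $F\,\underline{n}=_\beta M_n$ for all $n$, where $\underline n=\lambda fz.f^n(z)$ is the Church numeral; then the stream $[M_n]_{n\in\mathbb{N}}$ is a λ-term with $[M_n]_{n\in\mathbb{N}}=_\beta[M_0,[M_{n+1}]_{n\in\mathbb{N}}]$. $\mathcal{B}=\{(M,N):BT(M)=BT(N)\}$; the ω-rule: if $MP=NP$ for all closed $P$ then $M=N$; $\mathcal{B}\omega$ is the least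 λ-theory containing $\mathcal{B}$ closed under the ω-rule. *)

From Stdlib Require Import Arith List Relations.
Import ListNotations.

Inductive term : Type :=
| Var : nat -> term
| App : term -> term -> term
| Lam : term -> term.

Fixpoint lift (d c : nat) (t : term) : term :=
  match t with
  | Var n => if Nat.leb c n then Var (n + d) else Var n
  | App a b => App (lift d c a) (lift d c b)
  | Lam a => Lam (lift d (S c) a)
  end.

Fixpoint subst (k : nat) (u : term) (t : term) : term :=
  match t with
  | Var n => if Nat.eqb n k then lift k 0 u
             else if Nat.ltb k n then Var (pred n) else Var n
  | App a b => App (subst k u a) (subst k u b)
  | Lam a => Lam (subst (S k) u a)
  end.

Inductive beta : term -> term -> Prop :=
| beta_redex t u : beta (App (Lam t) u) (subst 0 u t)
| beta_appL a a' b : beta a a' -> beta (App a b) (App a' b)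
| beta_appR a b b' : beta b b' -> beta (App a b) (App a b')
| beta_lam a a' : beta a a' -> beta (Lam a) (Lam a').

Inductive eta : term -> term -> Prop :=
| eta_redex t : eta (Lam (App (lift 1 0 t) (Var 0))) t
| eta_appL a a' b : eta a a' -> eta (App a b) (App a' b)
| eta_appR a b b' : eta b b' -> eta (App a b) (App a b')
| eta_lam a a' : eta a a' -> eta (Lam a) (Lam a').

Definition beta_eta_step (a b : term) : Prop := beta a b \/ eta a b.

Definition bered : term -> term -> Prop := clos_refl_trans term beta_eta_step.

Definition beq : term -> term -> Prop := clos_refl_sym_trans term beta.

Fixpoint closed_at (k : nat) (t : term) : Prop :=
  match t with
  | Var n => n < k
  | App a b => closed_at k a /\ closed_at k b
  | Lam a => closed_at (S k) a
  end.

Definition closed (t : term) : Prop := closed_at 0 t.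

Definition apps (h : term) (l : list term) : term := fold_left App l h.

Fixpoint lams (n : nat) (t : term) : term :=
  match n with 0 => t | S m => Lam (lams m t) end.

Definition I_comb : term := Lam (Var 0).
Definition omega_small : term := Lam (App (Var 0) (Var 0)).
Definition Omega : term := App omega_small omega_small.

Fixpoint app_Omega (M : term) (n : nat) : term :=
  match n with 0 => M | S m => App (app_Omega M m) Omega end.

Definition church (n : nat) : term :=
  Lam (Lam (Nat.iter n (App (Var 1)) (Var 0))).

Definition church_succ : term :=
  Lam (Lam (Lam (App (Var 1) (App (App (Var 2) (Var 1)) (Var 0))))).

Definition pair (M1 M2 : term) : term :=
  Lam (App (App (Var 0) (lift 1 0 M1)) (lift 1 0 M2)).

Definition Theta_half : term :=
  Lam (Lam (App (Var 0) (App (App (Var 1) (Var 1)) (Var 0)))).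
Definition Theta : term := App Theta_half Theta_half.

(* The stream [M_n]_{n} built from a term F enumerating M_n (F n =_beta M_n):
   stream F := Theta (\s m. [F m, s (succ m)]) 0,
   so that stream F =_beta [M_0, [M_{n+1}]_n]. *)
Definition stream (F : term) : term :=
  App (App Theta
           (Lam (Lam (pair (App (lift 2 0 F) (Var 0))
                           (App (Var 1) (App church_succ (Var 0)))))))
      (church 0).

Definition effective (M : nat -> term) : Prop :=
  exists F, closed F /\ forall n, beq (App F (church n)) (M n).

Definition has_hnf (M : term) : Prop :=
  exists n y args, beq M (lams n (apps (Var y) args)).

(* Equality of Boehm trees, BT(M) = BT(N), as coinductive equality of trees *)
CoInductive BTeq : term -> term -> Prop :=
| bt_bot M N : ~ has_hnf M -> ~ has_hnf N -> BTeq M N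
| bt_node M N n y l1 l2 :
    beq M (lams n (apps (Var y) l1)) ->
    beq N (lams n (apps (Var y) l2)) ->
    length l1 = length l2 ->
    (forall i, i < length l1 -> BTeq (nth i l1 (Var 0)) (nth i l2 (Var 0))) ->
    BTeq M N.

Inductive Bomega : term -> term -> Prop :=
| bw_B M N : BTeq M N -> Bomega M N
| bw_refl M : Bomega M M
| bw_sym M N : Bomega M N -> Bomega N M
| bw_trans M N P : Bomega M N -> Bomega N P -> Bomega M P
| bw_app M M' N N' : Bomega M M' -> Bomega N N' -> Bomega (App M N) (App M' N')
| bw_lam M N : Bomega M N -> Bomega (Lam M) (Lam N)
| bw_omega M N : (forall P, closed P -> Bomega (App M P) (App N P)) -> Bomega M N.

(* By the ω-rule it suffices to show IO P Q = EO P Q for closed P and Q, i.e. to compare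
   the streams [P Ω^n Q]_n and [P Ω^n (η_n Q)]_n. Their entries are Bω-equal, since
   η_n ->>βη I and η-conversion is derivable from the ω-rule. A closed P either has an
   infinite head reduction or head-reduces to λx_1..x_k. x_i L; in both cases P Ω^n R is
   unsolvable for n >= k. So from index k on both streams have Böhm trees made of ⊥ entries
   only, and the finitely many earlier entries are handled by congruence. That unsolvable
   terms have no head normal form is the classical fact that head reduction terminates on
   terms with a head normal form, proved here from Church–Rosser and standardization. *)

From Stdlib Require Import Arith List Relations Lia Classical.
Import ListNotations.

Ltac destruct_nat_tests := repeat match goal with
  | |- context [?a =? ?b] => destruct (Nat.eqb_spec a b)
  | |- context [?a <? ?b] => destruct (Nat.ltb_spec a b)
  | |- context [?a <=? ?b] => destruct (Nat.leb_spec a b)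
  end.

(** * Renamings and simultaneous substitutions *)

Definition up_ren (r : nat -> nat) (n : nat) : nat :=
  match n with 0 => 0 | S m => S (r m) end.

Fixpoint ren (r : nat -> nat) (t : term) : term :=
  match t with
  | Var n => Var (r n)
  | App a b => App (ren r a) (ren r b)
  | Lam a => Lam (ren (up_ren r) a)
  end.

Definition up_sub (s : nat -> term) (n : nat) : term :=
  match n with 0 => Var 0 | S m => ren S (s m) end.

Fixpoint inst (s : nat -> term) (t : term) : term :=
  match t with
  | Var n => s n
  | App a b => App (inst s a) (inst s b)
  | Lam a => Lam (inst (up_sub s) a)
  end.

Definition scons (u : term) (s : nat -> term) (n : nat) : term :=
  match n with 0 => u | S m => s m end.

Lemma ren_ext t : forall r r', (forall n, r n = r' n) -> ren r t = ren r' t.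
Proof.
  induction t; intros r r' H; simpl; f_equal; auto.
  apply IHt; intros [|n]; simpl; auto.
Qed.

Lemma inst_ext t : forall s s', (forall n, s n = s' n) -> inst s t = inst s' t.
Proof.
  induction t; intros s s' H; simpl; f_equal; auto.
  apply IHt; intros [|n]; simpl; auto. rewrite H; auto.
Qed.

Lemma ren_ren t : forall r1 r2, ren r2 (ren r1 t) = ren (fun n => r2 (r1 n)) t.
Proof.
  induction t; intros r1 r2; simpl; f_equal; auto.
  rewrite IHt. apply ren_ext; intros [|n]; reflexivity.
Qed.

Lemma inst_ren t : forall s r, inst s (ren r t) = inst (fun n => s (r n)) t.
Proof.
  induction t; intros s r; simpl; f_equal; auto.
  rewrite IHt. apply inst_ext; intros [|n]; reflexivity.
Qed.

Lemma ren_inst t : forall s r, ren r (inst s t) = inst (fun n => ren r (s n)) t.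
Proof.
  induction t; intros s r; simpl; f_equal; auto.
  rewrite IHt. apply inst_ext; intros [|n]; simpl; auto.
  rewrite !ren_ren. reflexivity.
Qed.

Lemma inst_inst t : forall s s2, inst s2 (inst s t) = inst (fun n => inst s2 (s n)) t.
Proof.
  induction t; intros s s2; simpl; f_equal; auto.
  rewrite IHt. apply inst_ext; intros [|n]; simpl; auto.
  rewrite inst_ren, ren_inst. reflexivity.
Qed.

Lemma inst_ids t : forall s, (forall n, s n = Var n) -> inst s t = t.
Proof.
  induction t; intros s H; simpl; f_equal; auto.
  apply IHt; intros [|n]; simpl; auto. rewrite H; reflexivity.
Qed.

Lemma ren_as_inst t : forall r, ren r t = inst (fun n => Var (r n)) t.
Proof.
  induction t; intros r; simpl; f_equal; auto.
  rewrite IHt. apply inst_ext; intros [|n]; reflexivity.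
Qed.

Lemma inst_up_shift s t : inst (up_sub s) (ren S t) = ren S (inst s t).
Proof. rewrite inst_ren, ren_inst. reflexivity. Qed.

Definition lift_fn (d c n : nat) : nat := if c <=? n then n + d else n.

Lemma lift_ren t : forall d c, lift d c t = ren (lift_fn d c) t.
Proof.
  induction t; intros d c; simpl; try (f_equal; auto; fail).
  - unfold lift_fn. destruct (c <=? n); reflexivity.
  - f_equal. rewrite IHt. apply ren_ext; intros [|n]; unfold lift_fn; simpl; auto.
    destruct (c <=? n); reflexivity.
Qed.

Lemma lift1_shift t : lift 1 0 t = ren S t.
Proof. rewrite lift_ren. apply ren_ext; intro; unfold lift_fn; simpl; lia. Qed.

Definition subst_fn (k : nat) (u : term) (n : nat) : term :=
  if n =? k then lift k 0 u else if k <? n then Var (pred n) else Var n.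

Lemma subst_inst t : forall k u, subst k u t = inst (subst_fn k u) t.
Proof.
  induction t; intros k u; simpl; try (f_equal; auto; fail).
  f_equal. rewrite IHt.
  apply inst_ext; intros [|n]; unfold subst_fn; simpl; destruct_nat_tests; try lia; auto.
  - subst. rewrite !lift_ren, ren_ren. apply ren_ext; intro; unfold lift_fn; destruct_nat_tests; lia.
  - simpl. f_equal. lia.
Qed.

Lemma lift0 t : forall c, lift 0 c t = t.
Proof.
  intros. rewrite lift_ren, ren_as_inst.
  apply inst_ids; intro; unfold lift_fn; destruct_nat_tests; f_equal; lia.
Qed.

Lemma subst_lift_cancel t : forall d c k u, c <= k -> k <= c + d ->
  subst k u (lift (S d) c t) = lift d c t.
Proof.
  intros. rewrite subst_inst, !lift_ren, inst_ren, ren_as_inst.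
  apply inst_ext; intro n; unfold subst_fn, lift_fn; destruct_nat_tests; try (f_equal; lia); lia.
Qed.

Lemma subst0_lift1 t u : subst 0 u (lift 1 0 t) = t.
Proof. rewrite subst_lift_cancel by lia. apply lift0. Qed.

Lemma subst_lams k : forall j u t, subst j u (lams k t) = lams k (subst (k + j) u t).
Proof.
  induction k; intros; simpl; auto. f_equal. rewrite IHk. f_equal. f_equal. lia.
Qed.

Lemma inst_subst0 a : forall s b, inst s (subst 0 b a) = subst 0 (inst s b) (inst (up_sub s) a).
Proof.
  intros. rewrite !subst_inst, !inst_inst. apply inst_ext; intros [|n]; unfold subst_fn; simpl.
  - rewrite !lift0. reflexivity.
  - rewrite inst_ren. symmetry. apply inst_ids. intro; unfold subst_fn; destruct_nat_tests; f_equal; lia.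
Qed.

Lemma subst0_up_sub a : forall s b, subst 0 b (inst (up_sub s) a) = inst (scons b s) a.
Proof.
  intros. rewrite !subst_inst, !inst_inst. apply inst_ext; intros [|n]; unfold subst_fn; simpl.
  - rewrite lift0. reflexivity.
  - rewrite inst_ren. apply inst_ids. intro; unfold subst_fn; destruct_nat_tests; f_equal; lia.
Qed.

Lemma ren_subst0 a : forall r b, ren r (subst 0 b a) = subst 0 (ren r b) (ren (up_ren r) a).
Proof.
  intros. rewrite !(ren_as_inst _ r), (ren_as_inst _ (up_ren r)), inst_subst0.
  f_equal. apply inst_ext; intros [|n]; reflexivity.
Qed.

Lemma closed_inst t : forall k s, closed_at k t -> (forall n, n < k -> s n = Var n) -> inst s t = t.
Proof.
  induction t; intros k s Hc H; simpl in *.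
  - auto.
  - destruct Hc; f_equal; eauto.
  - f_equal. apply (IHt (S k)); auto. intros [|n] Hn; simpl; auto.
    rewrite H by lia. reflexivity.
Qed.

Lemma inst_closed t s : closed t -> inst s t = t.
Proof. intros H. apply (closed_inst _ 0); auto. intros; lia. Qed.

Lemma closed_lift t k d c : closed_at k t -> k <= c -> lift d c t = t.
Proof.
  intros. rewrite lift_ren, ren_as_inst. apply (closed_inst _ k); auto.
  intros; unfold lift_fn; destruct_nat_tests; f_equal; lia.
Qed.

Lemma closed_subst t k j u : closed_at k t -> k <= j -> subst j u t = t.
Proof.
  intros. rewrite subst_inst. apply (closed_inst _ k); auto.
  intros; unfold subst_fn; destruct_nat_tests; f_equal; lia.
Qed.

Lemma closed_ren t : forall k k' r, closed_at k t -> (forall n, n < k -> r n < k') ->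
  closed_at k' (ren r t).
Proof.
  induction t; intros k k' r Hc H; simpl in *; auto.
  - destruct Hc; split; eauto.
  - apply (IHt (S k)); auto. intros [|n] Hn; simpl; [lia|]. specialize (H n). lia.
Qed.

Lemma closed_at_inst t : forall k k' s, closed_at k t ->
  (forall n, n < k -> closed_at k' (s n)) -> closed_at k' (inst s t).
Proof.
  induction t; intros k k' s Hc H; simpl in *; auto.
  - destruct Hc; split; eauto.
  - apply (IHt (S k)); auto. intros [|n] Hn; simpl; try lia.
    apply (closed_ren _ k'). apply H; lia. intros; lia.
Qed.

Lemma closed_subst0 a b k : closed_at (S k) a -> closed_at k b -> closed_at k (subst 0 b a).
Proof.
  intros. rewrite subst_inst. apply (closed_at_inst _ (S k)); auto.
  intros n Hn; unfold subst_fn; destruct_nat_tests; subst; simpl; try lia.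
  rewrite lift0; auto.
Qed.

Lemma closed_lams k : forall j X, closed_at j (lams k X) -> closed_at (k + j) X.
Proof. induction k; intros; simpl in *; auto. replace (S (k + j)) with (k + S j) by lia. auto. Qed.

Lemma closed_apps_head l : forall k h, closed_at k (apps h l) -> closed_at k h.
Proof. induction l; intros k h H; simpl in *; auto. apply IHl in H. simpl in H. tauto. Qed.

Lemma closed_Theta : closed Theta.
Proof. cbv; repeat split; lia. Qed.

Lemma closed_church_succ : closed church_succ.
Proof. cbv; repeat split; lia. Qed.

Lemma closed_church n : closed (church n).
Proof. unfold closed; simpl. induction n; simpl; auto. Qed.

(** * Parallel reduction and the Church–Rosser theorem *)

Inductive par : term -> term -> Prop :=
| par_var n : par (Var n) (Var n)
| par_lam a a' : par a a' -> par (Lam a) (Lam a')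
| par_app a a' b b' : par a a' -> par b b' -> par (App a b) (App a' b')
| par_beta a a' b b' : par a a' -> par b b' -> par (App (Lam a) b) (subst 0 b' a').

Definition pars : term -> term -> Prop := clos_refl_trans_1n term par.

Lemma par_refl t : par t t.
Proof. induction t; constructor; auto. Qed.

Lemma beta_par a b : beta a b -> par a b.
Proof. induction 1; constructor; auto using par_refl. Qed.

Lemma par_ren a a' : par a a' -> forall r, par (ren r a) (ren r a').
Proof.
  induction 1; intros r; simpl; try constructor; auto.
  rewrite ren_subst0. constructor; auto.
Qed.

Lemma par_inst a a' : par a a' -> forall s s', (forall n, par (s n) (s' n)) ->
  par (inst s a) (inst s' a').
Proof.
  induction 1; intros s s' Hs; simpl; try constructor; auto.
  - apply IHpar. intros [|n]; simpl. constructor. apply par_ren; auto.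
  - rewrite inst_subst0. constructor; auto.
    apply IHpar1. intros [|n]; simpl. constructor. apply par_ren; auto.
Qed.

Lemma par_subst0 a a' b b' : par a a' -> par b b' -> par (subst 0 b a) (subst 0 b' a').
Proof.
  intros. rewrite !subst_inst. apply par_inst; auto.
  intros n; unfold subst_fn; destruct_nat_tests; try rewrite !lift0; auto; constructor.
Qed.

Fixpoint develop (t : term) : term :=
  match t with
  | Var n => Var n
  | Lam a => Lam (develop a)
  | App a b => match a with
               | Lam a0 => subst 0 (develop b) (develop a0)
               | _ => App (develop a) (develop b)
               end
  end.

Lemma par_develop a a' : par a a' -> par a' (develop a).
Proof.
  induction 1; simpl; try constructor; auto.
  - destruct a; try (constructor; auto; fail).
    inversion H; subst. inversion IHpar1; subst. constructor; auto.
  - apply par_subst0; auto.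
Qed.

Lemma pars_trans a b c : pars a b -> pars b c -> pars a c.
Proof.
  induction 1 as [|x y z Hxy _ IH]; intros Hc; auto.
  econstructor; [exact Hxy|]. apply IH, Hc.
Qed.

Lemma par_pars_strip a b c : par a b -> pars a c -> exists d, pars b d /\ par c d.
Proof.
  intros Hab Hac. revert b Hab. induction Hac as [|x y z Hxy Hyz IH]; intros b Hab.
  - exists b. split. constructor. auto.
  - destruct (IH (develop x)) as [d [H1 H2]]. apply par_develop; auto.
    exists d; split; auto. econstructor. apply par_develop; eauto. auto.
Qed.

Lemma pars_confluent a b c : pars a b -> pars a c -> exists d, pars b d /\ pars c d.
Proof.
  intros Hab. revert c. induction Hab as [|x y z Hxy Hyz IH]; intros c Hac.
  - exists c; split; auto. constructor.
  - destruct (par_pars_strip _ _ _ Hxy Hac) as [d [H1 H2]].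
    destruct (IH d H1) as [e [H3 H4]].
    exists e; split; auto. econstructor; eauto.
Qed.

Lemma church_rosser a b : beq a b -> exists c, pars a c /\ pars b c.
Proof.
  induction 1 as [x y H|x|x y _ [c [? ?]]|x y z _ [c [? ?]] _ [d [? ?]]].
  - exists y. split. econstructor. apply beta_par; eauto. constructor. constructor.
  - exists x; split; constructor.
  - eauto.
  - destruct (pars_confluent y c d) as [e [? ?]]; auto.
    exists e; split; eapply pars_trans; eauto.
Qed.

Definition not_lam (t : term) : Prop := match t with Lam _ => False | _ => True end.

Inductive hstep : term -> term -> Prop :=
| hstep_beta a b : hstep (App (Lam a) b) (subst 0 b a)
| hstep_app a a' b : hstep a a' -> not_lam a -> hstep (App a b) (App a' b)
| hstep_lam a a' : hstep a a' -> hstep (Lam a) (Lam a').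

Definition hreds : term -> term -> Prop := clos_refl_trans_1n term hstep.

CoInductive inf_head : term -> Prop :=
| inf_head_step M M' : hstep M M' -> inf_head M' -> inf_head M.

Definition is_hnf (t : term) : Prop := exists n y l, t = lams n (apps (Var y) l).

Lemma hreds_trans a b c : hreds a b -> hreds b c -> hreds a c.
Proof.
  induction 1 as [|x y z Hxy _ IH]; intros Hc; auto.
  econstructor; [exact Hxy|]. apply IH, Hc.
Qed.

Lemma hreds_lam a a' : hreds a a' -> hreds (Lam a) (Lam a').
Proof. induction 1. constructor. econstructor. apply hstep_lam; eauto. auto. Qed.

Lemma hstep_deterministic M M1 : hstep M M1 -> forall M2, hstep M M2 -> M1 = M2.
Proof.
  induction 1; intros M2 H2; inversion H2; subst; auto.
  - simpl in *; contradiction.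
  - simpl in *; contradiction.
  - f_equal; auto.
  - f_equal; auto.
Qed.

Lemma hstep_inst a a' : hstep a a' -> forall s, hstep (inst s a) (inst s a').
Proof.
  induction 1; intros s; simpl.
  - rewrite inst_subst0. constructor.
  - constructor; auto. destruct a; simpl in *; auto. inversion H.
  - constructor; auto.
Qed.

Lemma hstep_closed a a' : hstep a a' -> forall k, closed_at k a -> closed_at k a'.
Proof.
  induction 1; intros k Hc; simpl in *.
  - destruct Hc. apply closed_subst0; auto.
  - destruct Hc; split; auto.
  - auto.
Qed.

Lemma hreds_closed a a' k : hreds a a' -> closed_at k a -> closed_at k a'.
Proof. induction 1; auto. intros; eauto using hstep_closed. Qed.

Lemma apps_snoc h l a : apps h (l ++ [a]) = App (apps h l) a.
Proof. unfold apps. rewrite fold_left_app. reflexivity. Qed.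

Lemma apps_var_not_lam y l : not_lam (apps (Var y) l).
Proof. destruct l using rev_ind. simpl; auto. rewrite apps_snoc. simpl; auto. Qed.

Lemma app_eq_apps_var X b y l : App X b = apps (Var y) l ->
  exists l0, l = l0 ++ [b] /\ X = apps (Var y) l0.
Proof.
  destruct l using rev_ind; intros H. simpl in H; discriminate.
  rewrite apps_snoc in H. inversion H; subst. eauto.
Qed.

Lemma apps_var_no_hstep y l : forall X, ~ hstep (apps (Var y) l) X.
Proof.
  induction l using rev_ind; intros X H.
  - inversion H.
  - rewrite apps_snoc in H. inversion H; subst.
    + pose proof (apps_var_not_lam y l) as NL. rewrite <- H1 in NL. simpl in NL; contradiction.
    + eapply IHl; eauto.
Qed.

Lemma hnf_no_hstep G X : is_hnf G -> ~ hstep G X.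
Proof.
  intros [n [y [l ->]]]. revert X. induction n; intros X H; simpl in *.
  - eapply apps_var_no_hstep; eauto.
  - inversion H; subst. eapply IHn; eauto.
Qed.

Lemma hnf_or_hstep P : is_hnf P \/ exists P', hstep P P'.
Proof.
  induction P as [n|a IHa b _|a IHa].
  - left. exists 0, n, []. auto.
  - destruct a as [n|a1 a2|a0].
    + left. exists 0, n, [b]. auto.
    + destruct IHa as [[k [y [l E]]]|[a' Ha]].
      * destruct k; simpl in E; try discriminate. left. exists 0, y, (l ++ [b]).
        simpl. rewrite apps_snoc, <- E. auto.
      * right. exists (App a' b). constructor; simpl; auto.
    + right. eexists. constructor.
  - destruct IHa as [[k [y [l E]]]|[a' Ha]].
    + left. exists (S k), y, l. simpl; f_equal; auto.
    + right. exists (Lam a'). constructor; auto.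
Qed.

Lemma inf_head_or_hnf P : inf_head P \/ exists G, hreds P G /\ is_hnf G.
Proof.
  destruct (classic (exists G, hreds P G /\ is_hnf G)) as [H|H]; auto. left.
  revert P H. cofix CH. intros P H.
  destruct (hnf_or_hstep P) as [Hp|[P' Hs]].
  - exfalso. apply H. exists P; split; auto. constructor.
  - apply (inf_head_step _ P' Hs). apply CH. intros [G [? ?]]. apply H. exists G; split; auto.
    econstructor; eauto.
Qed.

Lemma inf_head_inst : forall a s, inf_head a -> inf_head (inst s a).
Proof.
  cofix CH. intros a s H. destruct H as [a a' Hs H].
  apply (inf_head_step _ (inst s a')). apply hstep_inst; auto. apply CH; auto.
Qed.

Lemma inf_head_lam_inv : forall t, inf_head (Lam t) -> inf_head t.
Proof.
  cofix CH. intros t H. inversion H as [M M' Hs H1 E]; subst.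
  inversion Hs; subst. eapply inf_head_step; [eassumption|]. apply CH; auto.
Qed.

Lemma inf_head_app : forall M N, inf_head M -> inf_head (App M N).
Proof.
  cofix CH. intros M N H. destruct M as [n|a b|t].
  - inversion H as [M M' Hs H1 E]. inversion Hs.
  - inversion H as [M M' Hs H1 E]; subst.
    apply (inf_head_step _ (App M' N)). constructor; simpl; auto. apply CH; auto.
  - apply (inf_head_step _ (subst 0 N t)). constructor.
    rewrite subst_inst. apply inf_head_inst. apply inf_head_lam_inv; auto.
Qed.

(** * Terms with a head normal form have finite head reduction *)

(** Takahashi's method: a parallel step factors as weak-head steps followed by an
    internal parallel step, and internal parallel steps can be postponed after head steps. *)

Inductive whstep : term -> term -> Prop :=
| whstep_beta a b : whstep (App (Lam a) b) (subst 0 b a)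
| whstep_app a a' b : whstep a a' -> whstep (App a b) (App a' b).

Definition whreds : term -> term -> Prop := clos_refl_trans_1n term whstep.

Inductive ipar_app : term -> term -> Prop :=
| ipar_app_var n : ipar_app (Var n) (Var n)
| ipar_app_redex a a' b b' : par a a' -> par b b' -> ipar_app (App (Lam a) b) (App (Lam a') b')
| ipar_app_app a a' b b' : ipar_app a a' -> par b b' -> ipar_app (App a b) (App a' b').

Inductive ipar : term -> term -> Prop :=
| ipar_lam a a' : par a a' -> ipar (Lam a) (Lam a')
| ipar_of_app a a' : ipar_app a a' -> ipar a a'.

Definition std_par (M N : term) : Prop := exists Z, whreds M Z /\ ipar Z N.

Lemma whstep_hstep a a' : whstep a a' -> hstep a a'.
Proof. induction 1; constructor; auto. inversion H; simpl; auto. Qed.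

Lemma whreds_hreds a a' : whreds a a' -> hreds a a'.
Proof. induction 1. constructor. econstructor. apply whstep_hstep; eauto. auto. Qed.

Lemma whreds_app a a' b : whreds a a' -> whreds (App a b) (App a' b).
Proof. induction 1. constructor. econstructor. apply whstep_app; eauto. auto. Qed.

Lemma whreds_hreds_trans a b c : whreds a b -> hreds b c -> hreds a c.
Proof. intros; eapply hreds_trans; eauto. apply whreds_hreds; auto. Qed.

Lemma ipar_app_not_lam_l a a' : ipar_app a a' -> not_lam a.
Proof. inversion 1; simpl; auto. Qed.

Lemma ipar_app_not_lam_r a a' : ipar_app a a' -> not_lam a'.
Proof. inversion 1; simpl; auto. Qed.

Lemma std_par_inst A A' : par A A' -> forall s s', (forall n, par (s n) (s' n)) ->
  (forall n, std_par (s n) (s' n)) -> std_par (inst s A) (inst s' A').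
Proof.
  induction 1; intros s s' Hp Hs; simpl.
  - auto.
  - exists (Lam (inst (up_sub s) a)). split. constructor. constructor.
    apply par_inst; auto. intros [|n]; simpl. constructor. apply par_ren; auto.
  - destruct (IHpar1 s s' Hp Hs) as [Z [H1 H2]].
    exists (App Z (inst s b)). split. apply whreds_app; auto.
    assert (par (inst s b) (inst s' b')) by (apply par_inst; auto).
    destruct H2. constructor. constructor; auto. constructor. constructor; auto.
  - assert (Hb : par (inst s b) (inst s' b')) by (apply par_inst; auto).
    destruct (IHpar1 (scons (inst s b) s) (scons (inst s' b') s')) as [Z [H1 H2]].
    + intros [|n]; simpl; auto.
    + intros [|n]; simpl; auto.
    + exists Z. split.
      * econstructor. apply whstep_beta. rewrite subst0_up_sub. auto.
      * rewrite inst_subst0, subst0_up_sub. auto.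
Qed.

Lemma par_std_par M N : par M N -> std_par M N.
Proof.
  intros H. rewrite <- (inst_ids M Var), <- (inst_ids N Var) by auto.
  apply std_par_inst; auto. intros; constructor.
  intros; exists (Var n). split. constructor. constructor; constructor.
Qed.

Lemma ipar_app_hstep Z N : ipar_app Z N -> forall N1, hstep N N1 ->
  exists Z', hstep Z Z' /\ par Z' N1.
Proof.
  induction 1 as [n|a a' b b' Ha Hb|a a' b b' Ha IH Hb]; intros N1 Hs.
  - inversion Hs.
  - inversion Hs; subst.
    + exists (subst 0 b a). split. constructor. apply par_subst0; auto.
    + simpl in *; contradiction.
  - inversion Hs as [|? a1 ? Ha1 Hn|]; subst.
    + apply ipar_app_not_lam_r in Ha. simpl in Ha. contradiction.
    + destruct (IH _ Ha1) as [Z' [? ?]]. exists (App Z' b). split.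
      constructor; auto. eapply ipar_app_not_lam_l; eauto. constructor; auto.
Qed.

Lemma par_hstep N N1 : hstep N N1 -> forall M, par M N -> exists M', hreds M M' /\ par M' N1.
Proof.
  intros Hs. induction Hs as [a b|a a' b Ha IH Hn|a a' Ha IH];
    intros M HM; destruct (par_std_par _ _ HM) as [Z [HZ1 HZ2]].
  - inversion HZ2 as [|? ? Hi]; subst.
    destruct (ipar_app_hstep _ _ Hi _ (hstep_beta a b)) as [Z' [? ?]].
    exists Z'. split; auto. eapply whreds_hreds_trans; eauto. econstructor; eauto. constructor.
  - inversion HZ2 as [|? ? Hi]; subst.
    destruct (ipar_app_hstep _ _ Hi _ (hstep_app _ _ b Ha Hn)) as [Z' [? ?]].
    exists Z'. split; auto. eapply whreds_hreds_trans; eauto. econstructor; eauto. constructor.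
  - inversion HZ2 as [z ? Hp|? ? Hi]; subst.
    + destruct (IH _ Hp) as [z' [? ?]]. exists (Lam z'). split.
      eapply whreds_hreds_trans; eauto. apply hreds_lam; auto. constructor; auto.
    + apply ipar_app_not_lam_r in Hi; simpl in Hi; contradiction.
Qed.

Lemma par_hreds N G : hreds N G -> forall M, par M N -> exists M', hreds M M' /\ par M' G.
Proof.
  induction 1 as [|x y z Hxy _ IH]; intros M HM.
  - exists M; split; auto. constructor.
  - destruct (par_hstep _ _ Hxy _ HM) as [M1 [? HM1]].
    destruct (IH _ HM1) as [M2 [? ?]].
    exists M2; split; auto. eapply hreds_trans; eauto.
Qed.

Lemma ipar_app_to_apps_var Z N : ipar_app Z N -> forall y l, N = apps (Var y) l ->
  exists l', Z = apps (Var y) l'.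
Proof.
  induction 1 as [n|a a' b b' _ _|a a' b b' _ IH _]; intros y l HN.
  - destruct l using rev_ind. simpl in HN. inversion HN; subst. exists []; auto.
    rewrite apps_snoc in HN; discriminate.
  - apply app_eq_apps_var in HN. destruct HN as [l0 [_ HX]].
    pose proof (apps_var_not_lam y l0) as NL. rewrite <- HX in NL. simpl in NL; contradiction.
  - apply app_eq_apps_var in HN. destruct HN as [l0 [_ HX]].
    destruct (IH _ _ HX) as [l' ->]. exists (l' ++ [b]). rewrite apps_snoc; auto.
Qed.

Lemma par_to_hnf_hreds n : forall M y l, par M (lams n (apps (Var y) l)) ->
  exists G, hreds M G /\ is_hnf G.
Proof.
  induction n; intros M y l HM; destruct (par_std_par _ _ HM) as [Z [HZ1 HZ2]]; simpl in HZ2.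
  - remember (apps (Var y) l) as N eqn:EN. destruct HZ2 as [a a' Hp|a a' Hi].
    + pose proof (apps_var_not_lam y l) as H; rewrite <- EN in H; simpl in H; contradiction.
    + destruct (ipar_app_to_apps_var _ _ Hi _ _ EN) as [l' ->].
      exists (apps (Var y) l'). split. apply whreds_hreds; auto. exists 0, y, l'. auto.
  - remember (Lam (lams n (apps (Var y) l))) as N eqn:EN. destruct HZ2 as [a a' Hp|a a' Hi].
    + injection EN; intros; subst.
      destruct (IHn _ _ _ Hp) as [G [? [n' [y' [l' ->]]]]].
      exists (Lam (lams n' (apps (Var y') l'))). split.
      eapply whreds_hreds_trans; eauto. apply hreds_lam; auto. exists (S n'), y', l'. auto.
    + apply ipar_app_not_lam_r in Hi. subst. simpl in Hi; contradiction.
Qed.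

Lemma pars_to_hnf_hreds M C : pars M C -> is_hnf C -> exists G, hreds M G /\ is_hnf G.
Proof.
  induction 1 as [|x y z Hxy _ IH]; intros HC.
  - exists x; split; auto. constructor.
  - destruct (IH HC) as [G [HG1 [n [y' [l ->]]]]].
    destruct (par_hreds _ _ HG1 _ Hxy) as [M' [? HM']].
    destruct (par_to_hnf_hreds _ _ _ _ HM') as [G' [? ?]].
    exists G'; split; auto. eapply hreds_trans; eauto.
Qed.

Lemma par_from_hnf n : forall y l X, par (lams n (apps (Var y) l)) X ->
  exists l', X = lams n (apps (Var y) l').
Proof.
  induction n; intros y l X H; simpl in *.
  - revert X H. induction l using rev_ind; intros X H.
    + simpl in H. inversion H; subst. exists []; auto.
    + rewrite apps_snoc in H. remember (apps (Var y) l) as A eqn:EA.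
      pose proof (apps_var_not_lam y l) as NL. rewrite <- EA in NL.
      clear EA. inversion H as [|? ? ?|a0 a' b0 b' Ha Hb E1 E2|a0 a' b0 b' Ha Hb E1 E2].
      * subst. destruct (IHl _ Ha) as [l' ->].
        exists (l' ++ [b']). rewrite apps_snoc; auto.
      * subst. simpl in NL; contradiction.
  - inversion H; subst. destruct (IHn _ _ _ H1) as [l' ->]. exists l'; auto.
Qed.

Lemma pars_from_hnf X Y : pars X Y -> is_hnf X -> is_hnf Y.
Proof.
  induction 1 as [|x y z Hxy _ IH]; auto. intros [n [y' [l ->]]].
  destruct (par_from_hnf _ _ _ _ Hxy) as [l' ->]. apply IH. exists n, y', l'; auto.
Qed.

Lemma has_hnf_not_inf_head M : has_hnf M -> ~ inf_head M.
Proof.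
  intros [n [y [l Hb]]] Hinf.
  destruct (church_rosser _ _ Hb) as [C [H1 H2]].
  assert (HC : is_hnf C) by (eapply pars_from_hnf; eauto; exists n, y, l; auto).
  destruct (pars_to_hnf_hreds _ _ H1 HC) as [G [HG1 HG2]].
  clear - HG1 HG2 Hinf. induction HG1 as [|x y z Hxy _ IH].
  - destruct Hinf as [M M' Hs _]. eapply hnf_no_hstep; eauto.
  - destruct Hinf as [M M' Hs Hinf]. apply IH; auto.
    rewrite (hstep_deterministic _ _ Hxy _ Hs). auto.
Qed.

Lemma beq_map (f : term -> term) : (forall x y, beta x y -> beta (f x) (f y)) ->
  forall x y, beq x y -> beq (f x) (f y).
Proof.
  intros Hf x y H. induction H.
  - apply rst_step; auto.
  - apply rst_refl.
  - apply rst_sym; auto.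
  - eapply rst_trans; eauto.
Qed.

Lemma beq_app a a' b b' : beq a a' -> beq b b' -> beq (App a b) (App a' b').
Proof.
  intros. apply rst_trans with (App a' b).
  - apply (beq_map (fun x => App x b)); auto. intros; constructor; auto.
  - apply (beq_map (fun x => App a' x)); auto. intros; constructor; auto.
Qed.

Lemma beq_lam a a' : beq a a' -> beq (Lam a) (Lam a').
Proof. apply (beq_map Lam). intros; constructor; auto. Qed.

Lemma beta_inst a a' : beta a a' -> forall s, beta (inst s a) (inst s a').
Proof.
  induction 1; intros s; simpl; try (constructor; auto; fail).
  rewrite inst_subst0. constructor.
Qed.

Lemma beq_inst s a a' : beq a a' -> beq (inst s a) (inst s a').
Proof. apply beq_map. intros; apply beta_inst; auto. Qed.

Lemma beq_lift a a' d c : beq a a' -> beq (lift d c a) (lift d c a').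
Proof. rewrite !lift_ren, !ren_as_inst. apply beq_inst. Qed.

Lemma beta_redex_eq t u v : v = subst 0 u t -> beta (App (Lam t) u) v.
Proof. intros ->; constructor. Qed.

Lemma hstep_beta_step a a' : hstep a a' -> beta a a'.
Proof. induction 1; constructor; auto. Qed.

Lemma hreds_beq a a' : hreds a a' -> beq a a'.
Proof.
  induction 1 as [|x y z Hxy _ IH]. apply rst_refl.
  eapply rst_trans; eauto. apply rst_step, hstep_beta_step, Hxy.
Qed.

Lemma beq_app_Omega M M' j : beq M M' -> beq (app_Omega M j) (app_Omega M' j).
Proof. induction j; simpl; auto. intros; apply beq_app; auto. apply rst_refl. Qed.

Definition unsolvable (M : term) : Prop := exists M', beq M M' /\ inf_head M'.

Lemma unsolvable_beq M N : beq M N -> unsolvable N -> unsolvable M.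
Proof. intros H [M' [? ?]]. exists M'; split; auto. eapply rst_trans; eauto. Qed.

Lemma unsolvable_inst s M : unsolvable M -> unsolvable (inst s M).
Proof.
  intros [M' [? ?]]. exists (inst s M'). split. apply beq_inst; auto.
  apply inf_head_inst; auto.
Qed.

Lemma unsolvable_no_hnf M : unsolvable M -> ~ has_hnf M.
Proof.
  intros [M' [Hb Hi]] [n [y [l H]]]. apply (has_hnf_not_inf_head M'); auto.
  exists n, y, l. eapply rst_trans; eauto. apply rst_sym; auto.
Qed.

Lemma BTeq_refl : forall M, BTeq M M.
Proof.
  cofix CH. intros M. destruct (classic (has_hnf M)) as [[n [y [l H]]]|H].
  - apply (bt_node M M n y l l H H eq_refl). intros; apply CH.
  - apply bt_bot; auto.
Qed.

Lemma beq_BTeq M N : beq M N -> BTeq M N.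
Proof.
  intros H. destruct (classic (has_hnf M)) as [[n [y [l H1]]]|H1].
  - apply (bt_node M N n y l l H1); auto.
    + eapply rst_trans; [apply rst_sym; eauto|]; auto.
    + intros; apply BTeq_refl.
  - apply bt_bot; auto. intros [n [y [l H2]]]. apply H1.
    exists n, y, l. eapply rst_trans; eauto.
Qed.

Lemma beq_Bomega M N : beq M N -> Bomega M N.
Proof. intros; apply bw_B, beq_BTeq; auto. Qed.

(** * Closed terms applied to enough copies of Ω *)

Lemma hstep_apps M M' l : hstep M M' -> not_lam M -> hstep (apps M l) (apps M' l).
Proof.
  revert M M'. induction l; intros M M' H N; simpl; auto.
  apply IHl. constructor; auto. simpl; auto.
Qed.

Lemma hstep_Omega : hstep Omega Omega.
Proof. apply (hstep_beta (App (Var 0) (Var 0)) omega_small). Qed.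

Lemma inf_head_apps_Omega : forall l, inf_head (apps Omega l).
Proof.
  cofix CH. intros l. apply (inf_head_step _ (apps Omega l)).
  apply hstep_apps. apply hstep_Omega. simpl; auto. apply CH.
Qed.

Lemma inf_head_app_Omega n : forall P, inf_head P -> inf_head (app_Omega P n).
Proof. induction n; intros; simpl; auto. apply inf_head_app; auto. Qed.

Lemma app_Omega_S j : forall M, app_Omega M (S j) = app_Omega (App M Omega) j.
Proof. induction j; intros; simpl; auto. rewrite <- IHj. reflexivity. Qed.

Lemma app_Omega_apps_Omega m : forall l, exists l', app_Omega (apps Omega l) m = apps Omega l'.
Proof.
  induction m; intros l; simpl. exists l; auto.
  destruct (IHm l) as [l' ->]. exists (l' ++ [Omega]). rewrite apps_snoc. auto.
Qed.

Lemma subst_apps l : forall k u h, subst k u (apps h l) = apps (subst k u h) (map (subst k u) l).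
Proof. induction l; intros; simpl; auto. Qed.

(** Feeding Ω to [λx_1..x_k. x_i L] puts Ω in head position for good. *)
Lemma app_Omega_lams_apps k : forall h l m, (h = Omega \/ exists i, h = Var i /\ i < k) ->
  exists l', beq (app_Omega (lams k (apps h l)) (k + m)) (apps Omega l').
Proof.
  induction k; intros h l m Hh.
  - simpl. destruct Hh as [->|[i [_ Hi]]]; [|lia].
    destruct (app_Omega_apps_Omega m l) as [l' E]. exists l'. rewrite E. apply rst_refl.
  - change (S k + m) with (S (k + m)). simpl lams. rewrite app_Omega_S.
    destruct (IHk (subst k Omega h) (map (subst k Omega) l) m) as [l' Hl'].
    + destruct Hh as [->|[i [-> Hi]]].
      * left. reflexivity.
      * simpl. destruct (Nat.eqb_spec i k).
        -- left. reflexivity.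
        -- destruct (Nat.ltb_spec k i). lia. right. exists i; split; auto. lia.
    + exists l'. eapply rst_trans; [|exact Hl'].
      apply beq_app_Omega, rst_step, beta_redex_eq.
      rewrite subst_lams, subst_apps, Nat.add_0_r. reflexivity.
Qed.

Lemma closed_app_Omega_unsolvable P : closed P ->
  exists N0, forall n, N0 <= n -> forall R, unsolvable (App (app_Omega P n) R).
Proof.
  intros HP. destruct (inf_head_or_hnf P) as [Hi|[G [HG [k [i [l ->]]]]]].
  - exists 0. intros n _ R. exists (App (app_Omega P n) R). split. apply rst_refl.
    apply inf_head_app, inf_head_app_Omega; auto.
  - exists k. intros n Hn R.
    assert (Hc : closed_at 0 (lams k (apps (Var i) l))) by (eapply hreds_closed; eauto).
    apply closed_lams, closed_apps_head in Hc. simpl in Hc.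
    destruct (app_Omega_lams_apps k (Var i) l (n - k)) as [l' Hl'].
    { right. exists i. split; auto. lia. }
    replace (k + (n - k)) with n in Hl' by lia.
    exists (apps Omega (l' ++ [R])). split.
    + rewrite apps_snoc. apply beq_app; [|apply rst_refl].
      eapply rst_trans; [|exact Hl']. apply beq_app_Omega, hreds_beq; auto.
    + apply inf_head_apps_Omega.
Qed.

(** * Streams *)

Lemma lift1_as_inst t : lift 1 0 t = inst (fun n => Var (S n)) t.
Proof. rewrite lift1_shift, ren_as_inst. reflexivity. Qed.

Lemma inst_up_lift2 s t : inst (up_sub (up_sub s)) (lift 2 0 t) = lift 2 0 (inst s t).
Proof.
  rewrite !lift_ren, inst_ren, ren_inst. apply inst_ext; intro n.
  unfold lift_fn; simpl. replace (n + 2) with (S (S n)) by lia. simpl.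
  rewrite ren_ren. apply ren_ext; intro; lia.
Qed.

Lemma inst_pair s M1 M2 : inst s (pair M1 M2) = pair (inst s M1) (inst s M2).
Proof. unfold pair. cbn [inst]. rewrite !lift1_shift, !inst_up_shift. reflexivity. Qed.

Lemma subst_pair k u M1 M2 : subst k u (pair M1 M2) = pair (subst k u M1) (subst k u M2).
Proof. rewrite !subst_inst. apply inst_pair. Qed.

Definition stream_step (G : term) : term :=
  Lam (Lam (pair (App (lift 2 0 G) (Var 0)) (App (Var 1) (App church_succ (Var 0))))).

Definition stream_from (G : term) (k : nat) : term :=
  App (App Theta (stream_step G)) (church k).

Lemma stream_from_0 F : stream F = stream_from F 0.
Proof. reflexivity. Qed.

Lemma inst_stream_from s G k : inst s (stream_from G k) = stream_from (inst s G) k.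
Proof.
  unfold stream_from, stream_step. cbn [inst].
  rewrite inst_pair. cbn [inst up_sub ren]. rewrite inst_up_lift2.
  rewrite (inst_closed Theta), (inst_closed church_succ), (inst_closed (church k));
    auto using closed_Theta, closed_church_succ, closed_church.
Qed.

Lemma Theta_fixpoint X : beq (App Theta X) (App X (App Theta X)).
Proof.
  eapply rst_trans.
  { apply rst_step, beta_appL, beta_redex_eq. reflexivity. }
  apply rst_step, beta_redex_eq. cbn [subst Nat.eqb Nat.ltb Nat.leb].
  rewrite lift0, subst0_lift1. reflexivity.
Qed.

Lemma subst_iter_app_var1 k :
  subst 1 (Var 1) (Nat.iter k (App (Var 1)) (Var 0)) = Nat.iter k (App (Var 2)) (Var 0).
Proof. induction k; simpl; auto. rewrite IHk; auto. Qed.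

Lemma subst_iter_app_var2 k :
  subst 0 (Var 0) (Nat.iter k (App (Var 2)) (Var 0)) = Nat.iter k (App (Var 1)) (Var 0).
Proof. induction k; simpl; auto. rewrite IHk; auto. Qed.

Lemma church_succ_beq k : beq (App church_succ (church k)) (church (S k)).
Proof.
  eapply rst_trans. apply rst_step, beta_redex_eq. reflexivity.
  cbn [subst Nat.eqb Nat.ltb]. rewrite (closed_lift (church k) 0) by (apply closed_church || lia).
  apply beq_lam, beq_lam, beq_app. apply rst_refl.
  eapply rst_trans. apply rst_step, beta_appL, beta_redex_eq. reflexivity.
  cbn [subst Nat.eqb Nat.ltb]. rewrite subst_iter_app_var1.
  apply rst_step, beta_redex_eq. rewrite subst_iter_app_var2. reflexivity.
Qed.

Lemma stream_from_unfold G k :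
  beq (stream_from G k) (pair (App G (church k)) (stream_from G (S k))).
Proof.
  unfold stream_from at 1.
  eapply rst_trans. { apply beq_app. apply Theta_fixpoint. apply rst_refl. }
  eapply rst_trans. { apply rst_step, beta_appL, beta_redex_eq. reflexivity. }
  eapply rst_trans. { apply rst_step, beta_redex_eq. reflexivity. }
  cbn [subst]. rewrite !subst_pair. cbn [subst Nat.eqb Nat.ltb Nat.leb].
  rewrite (subst_lift_cancel G 1 0 1), subst0_lift1, subst0_lift1, lift0 by lia.
  rewrite (closed_subst church_succ 0 1), (closed_subst church_succ 0 0)
    by (apply closed_church_succ || lia).
  unfold pair, stream_from. apply beq_lam, beq_app; [apply rst_refl|].
  apply beq_lift, beq_app; [apply rst_refl|apply church_succ_beq].
Qed.

Definition pairing : term := Lam (Lam (Lam (App (App (Var 0) (Var 2)) (Var 1)))).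

Lemma pairing_beq a b : beq (App (App pairing a) b) (pair a b).
Proof.
  eapply rst_trans. apply rst_step, beta_appL, beta_redex_eq. reflexivity.
  apply rst_step, beta_redex_eq. cbn [subst Nat.eqb Nat.ltb].
  rewrite (subst_lift_cancel a 1 0 1) by lia. reflexivity.
Qed.

(** [Bomega] is not known to be closed under [lift], so congruence for [pair] goes
    through the pairing combinator. *)
Lemma Bomega_pair a a' b b' : Bomega a a' -> Bomega b b' -> Bomega (pair a b) (pair a' b').
Proof.
  intros Ha Hb.
  eapply bw_trans. { apply beq_Bomega, rst_sym, pairing_beq. }
  eapply bw_trans. { apply bw_app; [apply bw_app; [apply bw_refl|]|]; eassumption. }
  apply beq_Bomega, pairing_beq.
Qed.

Lemma stream_from_BTeq : forall M1 M2 G1 G2 k, M1 = stream_from G1 k -> M2 = stream_from G2 k ->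
  (forall n, k <= n -> unsolvable (App G1 (church n)) /\ unsolvable (App G2 (church n))) ->
  BTeq M1 M2.
Proof.
  cofix CH. intros M1 M2 G1 G2 k E1 E2 H.
  apply (bt_node M1 M2 1 0
           [lift 1 0 (App G1 (church k)); lift 1 0 (stream_from G1 (S k))]
           [lift 1 0 (App G2 (church k)); lift 1 0 (stream_from G2 (S k))]);
    [subst; apply stream_from_unfold|subst; apply stream_from_unfold|reflexivity|].
  intros i Hi. destruct i as [|[|i]]; cbn [nth]; try rewrite !lift1_as_inst.
  - apply bt_bot; apply unsolvable_no_hnf, unsolvable_inst; apply H; lia.
  - apply (CH _ _ (inst (fun n => Var (S n)) G1) (inst (fun n => Var (S n)) G2) (S k));
      [apply inst_stream_from|apply inst_stream_from|].
    intros n Hn. destruct (H n ltac:(lia)) as [U1 U2].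
    apply (unsolvable_inst (fun n => Var (S n))) in U1, U2. cbn [inst] in U1, U2.
    rewrite (inst_closed (church n)) in U1, U2 by apply closed_church. auto.
  - simpl in Hi; lia.
Qed.

Lemma Bomega_stream_from G1 G2 (A B : nat -> term) N0 :
  (forall n, beq (App G1 (church n)) (A n)) -> (forall n, beq (App G2 (church n)) (B n)) ->
  (forall n, Bomega (A n) (B n)) -> (forall n, N0 <= n -> unsolvable (A n) /\ unsolvable (B n)) ->
  Bomega (stream_from G1 0) (stream_from G2 0).
Proof.
  intros HA HB HAB HU.
  assert (Htail : forall k, N0 <= k -> Bomega (stream_from G1 k) (stream_from G2 k)).
  { intros k Hk. apply bw_B. apply (stream_from_BTeq _ _ G1 G2 k); auto.
    intros n Hn. split; eapply unsolvable_beq; eauto; apply HU; lia. }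
  assert (Hhead : forall j k, k + j = N0 -> Bomega (stream_from G1 k) (stream_from G2 k)).
  { induction j as [|j IH]; intros k Hk; [apply Htail; lia|].
    eapply bw_trans. { apply beq_Bomega, stream_from_unfold. }
    eapply bw_trans; [|apply beq_Bomega, rst_sym, stream_from_unfold].
    apply Bomega_pair; [|apply IH; lia].
    eapply bw_trans. apply beq_Bomega, HA. eapply bw_trans. apply HAB.
    apply beq_Bomega, rst_sym, HB. }
  apply (Hhead N0 0); lia.
Qed.

Lemma Bomega_eta_redex t : Bomega (Lam (App (lift 1 0 t) (Var 0))) t.
Proof.
  apply bw_omega. intros P HP. apply beq_Bomega, rst_step, beta_redex_eq.
  cbn [subst Nat.eqb]. rewrite subst0_lift1, lift0. reflexivity.
Qed.

Lemma eta_Bomega a b : eta a b -> Bomega a b.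
Proof.
  induction 1.
  - apply Bomega_eta_redex.
  - apply bw_app; auto. apply bw_refl.
  - apply bw_app; auto. apply bw_refl.
  - apply bw_lam; auto.
Qed.

Lemma bered_Bomega a b : bered a b -> Bomega a b.
Proof.
  induction 1 as [x y [H|H]| |].
  - apply beq_Bomega, rst_step, H.
  - apply eta_Bomega, H.
  - apply bw_refl.
  - eapply bw_trans; eauto.
Qed.

Lemma Bomega_app_of_bered_I e Q : bered e I_comb -> Bomega (App e Q) Q.
Proof.
  intros He. eapply bw_trans. { apply bw_app. apply bered_Bomega, He. apply bw_refl. }
  apply beq_Bomega, rst_step, beta_redex_eq. cbn [subst Nat.eqb]. symmetry; apply lift0.
Qed.

Lemma inst_app_Omega s M n : inst s (app_Omega M n) = app_Omega (inst s M) n.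
Proof.
  induction n as [|n IH]; simpl; [reflexivity|]. rewrite IH. reflexivity.
Qed.

Lemma beq_app2_inst M X P Q : closed M -> beq (App (App M (Var 1)) (Var 0)) X ->
  beq (App (App M P) Q) (inst (scons Q (scons P Var)) X).
Proof.
  intros HM H. apply (beq_inst (scons Q (scons P Var))) in H.
  cbn [inst scons] in H. rewrite inst_closed in H; auto.
Qed.

Lemma beq_app_church_inst s F n X : beq (App F (church n)) X ->
  beq (App (inst s F) (church n)) (inst s X).
Proof.
  intros H. apply (beq_inst s) in H. cbn [inst] in H.
  rewrite (inst_closed (church n)) in H; auto using closed_church.
Qed.

(* Effectiveness of the enumeration and closedness of the enumerators are only needed for
   IO and EO to exist. *)
Theorem mainTheorem12
  (etas : nat -> term)
  (Heff : effective etas)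
  (Hcl : forall i, closed (etas i))
  (Hred : forall i, bered (etas i) I_comb)
  (IO EO : term)
  (HIOc : closed IO) (HEOc : closed EO)
  (HIO : exists F, closed_at 2 F /\
           (forall n, beq (App F (church n)) (App (app_Omega (Var 1) n) (Var 0))) /\
           beq (App (App IO (Var 1)) (Var 0)) (stream F))
  (HEO : exists F, closed_at 2 F /\
           (forall n, beq (App F (church n))
                          (App (app_Omega (Var 1) n) (App (etas n) (Var 0)))) /\
           beq (App (App EO (Var 1)) (Var 0)) (stream F)) :
  Bomega IO EO.
Proof.
  destruct HIO as [FI [_ [HFI HSI]]], HEO as [FE [_ [HFE HSE]]].
  apply bw_omega; intros P HP; apply bw_omega; intros Q HQ.
  set (s := scons Q (scons P Var)).
  apply (beq_app2_inst _ _ P Q HIOc) in HSI. apply (beq_app2_inst _ _ P Q HEOc) in HSE.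
  rewrite stream_from_0, inst_stream_from in HSI, HSE.
  eapply bw_trans; [apply beq_Bomega, HSI|].
  eapply bw_trans; [|apply beq_Bomega, rst_sym, HSE].
  destruct (closed_app_Omega_unsolvable P HP) as [N0 HN0].
  apply (Bomega_stream_from _ _ (fun n => App (app_Omega P n) Q)
           (fun n => App (app_Omega P n) (App (etas n) Q)) N0).
  - intros n. specialize (HFI n). apply (beq_app_church_inst s) in HFI.
    cbn [inst] in HFI. rewrite inst_app_Omega in HFI. exact HFI.
  - intros n. specialize (HFE n). apply (beq_app_church_inst s) in HFE.
    cbn [inst] in HFE. rewrite inst_app_Omega, (inst_closed (etas n)) in HFE by apply Hcl.
    exact HFE.
  - intros n. apply bw_app; [apply bw_refl|]. apply bw_sym, Bomega_app_of_bered_I, Hred.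
  - intros n Hn; split; apply HN0; auto.
Qed.
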